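(* Let $(X,\Delta,\varepsilon,T)$ be a TSD object over a field $\mathbb k$, let $R=\mathbb k[[\hbar]]/(\hbar^2)$ and $X_\hbar=X\otimes_{\mathbb k}R$ with $\Delta$, $\Delta_3$ extended $R$-linearly. For a $\mathbb k$-linear $\psi\colon X^{\otimes 3}\to X$ let $T_\psi=T+\hbar\psi$ (extended $R$-linearly). Then: (1) $T_\psi$ is an infinitesimal deformation of $T$ if and only if $\psi\in Z^2_{\rm TSD}(X;X)$; (2) for $\psi,\psi'\in Z^2_{\rm TSD}(X;X)$, the deformations $T_\psi$ and $T_{\psi'}$ are equivalent if and only if $\psi-\psi'\in B^2_{\rm TSD}(X;X)$. Consequently, equivalence classes of infinitesimal deformations of $T$ are in bijection with $H^2_{\rm TSD}(X;X)$.
   Context: A TSD object is a $\mathbb k$-module $X$ with a coassociative counital comultiplication $\Delta$, counit $\varepsilon$, $\Delta_3=(\Delta\otimes\mathbb 1)\Delta$ (Sweedler notation $\Delta_3(w)=w^{(1)}\otimes w^{(2)}\otimes w^{(3)}$), and a linear $T\colon X^{\otimes 3}\to X$ with (i) $\Delta_3T=T^{\otimes 3}\sigma\Delta_3^{\otimes 3}$, where $\sigma$ sends $u_1\otimes\cdots\otimes u_9$ to $u_1\otimes u_4\otimes u_7\otimes u_2\otimes u_5\otimes u_8\otimes u_3\otimes u_6\otimes u_9$, and (ii) $T(T(x\otimes y\otimes z)\otimes w\otimes u)=T(T(x\otimes w^{(1)}\otimes u^{(1)})\otimes T(y\otimes w^{(2)}\otimes u^{(2)})\otimes T(z\otimes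 w^{(3)}\otimes u^{(3)}))$. An infinitesimal deformation of $T$ is an $R$-linear $T'\colon X_\hbar^{\otimes 3}\to X_\hbar$ with $T'\equiv T$ mod $\hbar$ such that $(X_\hbar,\Delta,T')$ satisfies (i) and (ii). Two deformations $T',T''$ are equivalent if there is an $R$-linear $g\colon X_\hbar\to X_\hbar$ with $g\equiv\mathbb 1$ mod $\hbar$, $\Delta_3 g=g^{\otimes 3}\Delta_3$ and $g\circ T'=T''\circ g^{\otimes 3}$. TSD cohomology: $C^1_{\rm TSD}(X;X)$ = ternary coderivations $f$ (i.e. $\Delta_3 f=(f\otimes\mathbb 1\otimes\mathbb 1+\mathbb 1\otimes f\otimes\mathbb 1+\mathbb 1\otimes\mathbb 1\otimes f)\Delta_3$); $C^2_{\rm TSD}(X;X)$ = linear $\psi\colon X^{\otimes 3}\to X$ with $\Delta_3\psi=(\psi\otimes T\otimes T+T\otimes\psi\otimes T+T\otimes T\otimes\psi)\sigma\Delta_3^{\otimes 3}$; $\delta^1 f(x\otimes y\otimes z)=f(T(x\otimes y\otimes z))-T(f(x)\otimes y\otimes z)-T(x\otimes f(y)\otimes z)-T(x\otimes y\otimes f(z))$; $\delta^2\psi(x\otimes y\otimes z\otimes w\otimes u)=T(\psi(x\otimes y\otimes z)\otimes w\otimes u)+\psi(T(x\otimes y\otimes z)\otimes w\otimes u)-\psi(A_1\otimes A_2\otimes A_3)-T(\Psi_1\otimes A_2\otimes A_3)-T(A_1\otimes\Psi_2\otimes A_3)-T(A_1\otimes A_2\otimes\Psi_3)$ with $A_i=T(x_i\otimes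 w^{(i)}\otimes u^{(i)})$, $(x_1,x_2,x_3)=(x,y,z)$, and $\Psi_i$ the same with $\psi$ in place of $T$. $Z^2_{\rm TSD}=C^2_{\rm TSD}\cap\ker\delta^2$, $B^2_{\rm TSD}=\delta^1(C^1_{\rm TSD})$, $H^2_{\rm TSD}=Z^2_{\rm TSD}/B^2_{\rm TSD}$. *)

From HB Require Import structures.
From mathcomp Require Import all_boot all_algebra.
From mathcomp Require Import finmap.
From mathcomp.multinomials Require Import monalg.
Set Implicit Arguments. Unset Strict Implicit. Unset Printing Implicit Defensive.
Import GRing.Theory.
Local Open Scope ring_scope.

(* Dual numbers  R = k[[hbar]]/(hbar^2) = { a + hbar b }.                   *)
Section Dual.
Variable K : fieldType.
Record dual := Dual { dfst : K; dsnd : K }.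
Definition dual_to (x : dual) := (dfst x, dsnd x).
Definition dual_of (p : K * K) := Dual p.1 p.2.
Lemma dual_toK : cancel dual_to dual_of. Proof. by case. Qed.
HB.instance Definition _ := Choice.copy dual (can_type dual_toK).

Definition dzero := Dual 0 0.
Definition dopp x := Dual (- dfst x) (- dsnd x).
Definition dadd x y := Dual (dfst x + dfst y) (dsnd x + dsnd y).
Definition done := Dual 1 0.
Definition dmul x y := Dual (dfst x * dfst y) (dfst x * dsnd y + dsnd x * dfst y).

Lemma daddA : associative dadd.
Proof. by move=> [a b] [c d] [e f]; rewrite /dadd /= !addrA. Qed.
Lemma daddC : commutative dadd.
Proof. by move=> [a b] [c d]; rewrite /dadd /= (addrC a) (addrC b). Qed.
Lemma dadd0 : left_id dzero dadd.
Proof. by move=> [a b]; rewrite /dadd /= !add0r. Qed.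
Lemma daddN : left_inverse dzero dopp dadd.
Proof. by move=> [a b]; rewrite /dadd /= !addNr. Qed.
HB.instance Definition _ := GRing.isZmodule.Build dual daddA daddC dadd0 daddN.

Lemma dmulA : associative dmul.
Proof.
move=> [a b] [c d] [e f]; rewrite /dmul /=; congr Dual.
  by rewrite mulrA.
by rewrite !mulrDr !mulrDl !mulrA addrA.
Qed.
Lemma dmulC : commutative dmul.
Proof.
by move=> [a b] [c d]; rewrite /dmul /= (mulrC a) addrC (mulrC a) (mulrC b).
Qed.
Lemma dmul1 : left_id done dmul.
Proof. by move=> [a b]; rewrite /dmul /= !mul1r mul0r addr0. Qed.
Lemma dmulDl : left_distributive dmul dadd.
Proof.
move=> [a b] [c d] [e f]; rewrite /dmul /dadd /=; congr Dual.
  by rewrite mulrDl.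
by rewrite !mulrDl addrACA.
Qed.
Lemma done_neq0 : done != dzero.
Proof. by apply/negP => /eqP [] /eqP; rewrite oner_eq0. Qed.
HB.instance Definition _ :=
  GRing.Zmodule_isComNzRing.Build dual dmulA dmulC dmul1 dmulDl done_neq0.

Definition dembed (c : K) : dual := Dual c 0.
Definition hbar : dual := Dual 0 1.
End Dual.

(* A free S-module with basis I is {malg S[I]}; the tensor power of such     *)
(* modules over S is the free module on the product of the bases.  An       *)
(* S-linear map  S[J] -> S[I]  is (uniquely) given by f : J -> {malg S[I]}.  *)
Section Free.
Variable S : comNzRingType.

Definition lext (I J : choiceType) (f : J -> {malg S[I]}) (v : {malg S[J]})
  : {malg S[I]} := \sum_(j <- msupp v) v@_j *: f j.

Definition comp (I J L : choiceType) (f : J -> {malg S[I]}) (g : L -> {malg S[J]})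
  : L -> {malg S[I]} := fun l => lext f (g l).

Definition idm (I : choiceType) : I -> {malg S[I]} := fun i => << i >>.

Definition tens2 (I J : choiceType) (u : {malg S[I]}) (v : {malg S[J]})
  : {malg S[(I * J)%type]} :=
  \sum_(i <- msupp u) \sum_(j <- msupp v) << u@_i * v@_j *g (i, j) >>.
Definition tens3 (I J L : choiceType) (u : {malg S[I]}) (v : {malg S[J]})
  (w : {malg S[L]}) : {malg S[(I * J * L)%type]} :=
  \sum_(i <- msupp u) \sum_(j <- msupp v) \sum_(l <- msupp w)
     << u@_i * v@_j * w@_l *g (i, j, l) >>.

Definition mtens2 (I I' J J' : choiceType) (f : I -> {malg S[I']})
  (g : J -> {malg S[J']}) : I * J -> {malg S[(I' * J')%type]} :=
  fun x => tens2 (f x.1) (g x.2).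
Definition mtens3 (I I' J J' L L' : choiceType) (f : I -> {malg S[I']})
  (g : J -> {malg S[J']}) (h : L -> {malg S[L']})
  : I * J * L -> {malg S[(I' * J' * L')%type]} :=
  fun x => tens3 (f x.1.1) (g x.1.2) (h x.2).

Definition addm (I J : choiceType) (f g : J -> {malg S[I]}) : J -> {malg S[I]} :=
  fun x => f x + g x.
Definition subm (I J : choiceType) (f g : J -> {malg S[I]}) : J -> {malg S[I]} :=
  fun x => f x - g x.

Definition assocm (I : choiceType) : I * (I * I) -> {malg S[(I * I * I)%type]} :=
  fun x => << (x.1, x.2.1, x.2.2) >>.

Definition sigma (I : choiceType)
  : (I * I * I) * (I * I * I) * (I * I * I)
      -> {malg S[((I * I * I) * (I * I * I) * (I * I * I))%type]} :=
  fun p =>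
    let: (x, y, z) := p in
    << ((x.1.1, y.1.1, z.1.1), (x.1.2, y.1.2, z.1.2), (x.2, y.2, z.2)) >>.

Variable I : choiceType.
Implicit Types (D : I -> {malg S[(I * I)%type]}) (eps : I -> S)
  (T : I * I * I -> {malg S[I]}).

Definition coassociative D :=
  comp (mtens2 D (@idm I)) D =1 comp (@assocm I) (comp (mtens2 (@idm I) D) D).

(* (eps (x) 1) Delta = 1 = (1 (x) eps) Delta, using k (x) X = X = X (x) k *)
Definition counital D eps :=
  comp (fun x : I * I => eps x.1 *: << x.2 >>) D =1 @idm I /\
  comp (fun x : I * I => eps x.2 *: << x.1 >>) D =1 @idm I.

Definition Delta3 D : I -> {malg S[(I * I * I)%type]} := comp (mtens2 D (@idm I)) D.

Definition TSD_cond_i D T :=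
  comp (Delta3 D) T =1
  comp (mtens3 T T T) (comp (@sigma I) (mtens3 (Delta3 D) (Delta3 D) (Delta3 D))).

(* Sweedler expression  G( sum F1(x (x) w1 (x) u1) (x) F2(y (x) w2 (x) u2)
                                  (x) F3(z (x) w3 (x) u3) ),
   as a linear map on X^{(x)5} (basis I*I*I*I*I, points (x,y,z,w,u)). *)
Definition sweedler D (G F1 F2 F3 : I * I * I -> {malg S[I]})
  : I * I * I * I * I -> {malg S[I]} :=
  fun p =>
    let: (x, y, z, w, u) := p in
    lext G (lext (fun q : (I * I * I) * (I * I * I) =>
                    tens3 (F1 (x, q.1.1.1, q.2.1.1))
                          (F2 (y, q.1.1.2, q.2.1.2))
                          (F3 (z, q.1.2, q.2.2)))
                 (tens2 (Delta3 D w) (Delta3 D u))).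

Definition first_slot (G F : I * I * I -> {malg S[I]})
  : I * I * I * I * I -> {malg S[I]} :=
  fun p => let: (x, y, z, w, u) := p in
           lext G (tens3 (F (x, y, z)) << w >> << u >>).

Definition TSD_cond_ii D T := first_slot T T =1 sweedler D T T T T.

Definition is_TSD D eps T :=
  [/\ coassociative D, counital D eps, TSD_cond_i D T & TSD_cond_ii D T].

Definition coderivation D (f : I -> {malg S[I]}) :=
  comp (Delta3 D) f =1
  comp (addm (addm (mtens3 f (@idm I) (@idm I)) (mtens3 (@idm I) f (@idm I)))
             (mtens3 (@idm I) (@idm I) f)) (Delta3 D).

Definition C2 D T (psi : I * I * I -> {malg S[I]}) :=
  comp (Delta3 D) psi =1
  comp (addm (addm (mtens3 psi T T) (mtens3 T psi T)) (mtens3 T T psi))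
       (comp (@sigma I) (mtens3 (Delta3 D) (Delta3 D) (Delta3 D))).

Definition delta1 T (f : I -> {malg S[I]}) : I * I * I -> {malg S[I]} :=
  fun p => let: (x, y, z) := p in
    lext f (T (x, y, z))
    - lext T (tens3 (f x) << y >> << z >>)
    - lext T (tens3 << x >> (f y) << z >>)
    - lext T (tens3 << x >> << y >> (f z)).

Definition delta2 D T (psi : I * I * I -> {malg S[I]})
  : I * I * I * I * I -> {malg S[I]} :=
  fun p =>
    first_slot T psi p + first_slot psi T p
    - sweedler D psi T T T p
    - sweedler D T psi T T p
    - sweedler D T T psi T p
    - sweedler D T T T psi p.

Definition Z2 D T (psi : I * I * I -> {malg S[I]}) :=
  C2 D T psi /\ delta2 D T psi =1 (fun _ => 0).

Definition B2 D T (phi : I * I * I -> {malg S[I]}) :=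
  exists2 f, coderivation D f & delta1 T f =1 phi.

End Free.

(* X_hbar = X (x)_k R is the free R-module on the same basis I, and          *)
(* X_hbar^{(x)_R 3} the free R-module on I*I*I.                               *)
Section Deform.
Variables (K : fieldType) (I : choiceType).
Local Notation R := (dual K).

Definition cmap (S S' : comNzRingType) (J : choiceType) (phi : S -> S')
  (v : {malg S[J]}) : {malg S'[J]} :=
  \sum_(j <- msupp v) << phi v@_j *g j >>.

Definition liftm (J : choiceType) (f : J -> {malg K[I]}) : J -> {malg R[I]} :=
  fun j => cmap (@dembed K) (f j).
Definition liftm2 (f : I -> {malg K[(I * I)%type]}) : I -> {malg R[(I * I)%type]} :=
  fun j => cmap (@dembed K) (f j).

Definition modh (J : choiceType) (f : J -> {malg R[I]}) : J -> {malg K[I]} :=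
  fun j => cmap (@dfst K) (f j).

Variables (D : I -> {malg K[(I * I)%type]}) (T : I * I * I -> {malg K[I]}).

Definition Tpsi (psi : I * I * I -> {malg K[I]}) : I * I * I -> {malg R[I]} :=
  fun x => liftm T x + hbar K *: liftm psi x.

Definition inf_deformation (T' : I * I * I -> {malg R[I]}) :=
  [/\ modh T' =1 T, TSD_cond_i (liftm2 D) T' & TSD_cond_ii (liftm2 D) T'].

Definition equiv_deformations (T' T'' : I * I * I -> {malg R[I]}) :=
  exists g : I -> {malg R[I]},
    [/\ modh g =1 @idm K I,
        comp (Delta3 (liftm2 D)) g =1 comp (mtens3 g g g) (Delta3 (liftm2 D))
      & comp g T' =1 comp T'' (mtens3 g g g)].
End Deform.

From Pilot Require Import Defs.
From HB Require Import structures.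
From mathcomp Require Import all_boot all_algebra.
From mathcomp Require Import finmap.
From mathcomp.multinomials Require Import monalg.
From Stdlib Require Import FunctionalExtensionality.
Import GRing.Theory.
Local Open Scope ring_scope.
Set Implicit Arguments. Unset Strict Implicit. Unset Printing Implicit Defensive.

(* Over R = k[h]/(h^2) every R-linear map between the free modules X_h^{(x)n}
   is uniquely f0 + h f1 with f0, f1 k-linear ([dualm f0 f1]), and composition
   and tensor products obey the Leibniz rule
     (f0 + h f1)(g0 + h g1) = f0 g0 + h (f0 g1 + f1 g0).
   Hence every identity between such maps splits into its h^0 and h^1 parts.
   For T_psi = T + h psi the h^0 parts of the TSD axioms (i) and (ii) are the
   axioms for T, and the h^1 parts are exactly "psi is a 2-cochain" and
   "delta^2 psi = 0".  An equivalence g is 1 + h f; the h^1 part of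
   "g is a coalgebra map" says that f is a coderivation, and that of
   g T_psi = T_psi' g^{(x)3} says delta^1 f = psi' - psi. *)

Local Notation funext := (functional_extensionality _ _).

Section LinearExtension.
Variables (S : comNzRingType) (I J : choiceType).
Implicit Types (f g : J -> {malg S[I]}) (v : {malg S[J]}).

Lemma lext_supp f v (d : {fset J}) :
  (msupp v `<=` d)%fset -> lext f v = \sum_(j <- d) v@_j *: f j.
Proof.
move=> sub; apply: big_fset_incl => // j _ jn.
by rewrite mcoeff_outdom // scale0r.
Qed.

Lemma lext_is_linear f : linear (lext f).
Proof.
move=> c v w; pose d := (msupp v `|` msupp w)%fset.
rewrite (@lext_supp _ (c *: v + w) d); last first.
  by rewrite (fsubset_trans (msuppD_le _ _)) // fsetSU // msuppZ_le.
rewrite (@lext_supp _ v d) ?fsubsetUl // (@lext_supp _ w d) ?fsubsetUr //.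
rewrite scaler_sumr -big_split; apply: eq_bigr => j _.
by rewrite mcoeffD mcoeffZ scalerDl scalerA.
Qed.

HB.instance Definition _ f :=
  GRing.isLinear.Build S {malg S[J]} {malg S[I]} _ (lext f) (lext_is_linear f).

Lemma malgUZ (c : S) (j : J) : << c *g j >> = c *: << j >>.
Proof.
apply/malgP => k; rewrite mcoeffZ !mcoeffU.
by case: (j == k); rewrite ?mulr1 ?mulr0.
Qed.

Lemma lextU f c j : lext f << c *g j >> = c *: f j.
Proof. by rewrite (@lext_supp _ _ [fset j]%fset) ?msuppU_le // big_seq_fset1 mcoeffUU. Qed.

Lemma lext1 f j : lext f << j >> = f j.
Proof. by rewrite lextU scale1r. Qed.

Lemma lext_idm v : lext (@idm S J) v = v.
Proof. by rewrite [RHS]monalgE; apply: eq_bigr => j _; rewrite malgUZ. Qed.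

Lemma lextDf f g v : lext (fun j => f j + g j) v = lext f v + lext g v.
Proof. by rewrite /lext -big_split; apply: eq_bigr => j _; rewrite scalerDr. Qed.

Lemma lextNf f v : lext (fun j => - f j) v = - lext f v.
Proof. by rewrite /lext -sumrN; apply: eq_bigr => j _; rewrite scalerN. Qed.

Lemma lext_eq0 f v : f =1 (fun=> 0) -> lext f v = 0.
Proof. by move=> f0; rewrite /lext big1 // => j _; rewrite f0 scaler0. Qed.

Lemma eq_lext f g : f =1 g -> lext f =1 lext g.
Proof. by move=> fg v; apply: eq_bigr => j _; rewrite fg. Qed.

End LinearExtension.

Section LinearMaps.
Variable S : comNzRingType.
Variables I J L : choiceType.

Lemma comp_idml (g : J -> {malg S[I]}) : Defs.comp (@idm S I) g = g.
Proof. by apply: funext => x; apply: lext_idm. Qed.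

Lemma comp_idmr (f : J -> {malg S[I]}) : Defs.comp f (@idm S J) = f.
Proof. by apply: funext => x; apply: lext1. Qed.

Lemma comp0m (g : L -> {malg S[J]}) : Defs.comp (fun=> 0 : {malg S[I]}) g = fun=> 0.
Proof. by apply: funext => x; apply: lext_eq0. Qed.

Lemma compm0 (f : J -> {malg S[I]}) :
  Defs.comp f (fun _ : L => 0 : {malg S[J]}) = fun=> 0.
Proof. by apply: funext => x; apply: linear0. Qed.

Lemma addm0 (f : J -> {malg S[I]}) : addm f (fun=> 0) = f.
Proof. by apply: funext => x; apply: addr0. Qed.

Lemma add0m (f : J -> {malg S[I]}) : addm (fun=> 0) f = f.
Proof. by apply: funext => x; apply: add0r. Qed.

End LinearMaps.

Section Tensors.
Variables (S : comNzRingType) (I J L : choiceType).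
Implicit Types (u : {malg S[I]}) (v : {malg S[J]}) (w : {malg S[L]}).

Lemma tens2E u v : tens2 u v = lext (fun i => lext (fun j => << (i, j) >>) v) u.
Proof.
rewrite /tens2 /lext; apply: eq_bigr => i _; rewrite scaler_sumr.
by apply: eq_bigr => j _; rewrite malgUZ scalerA.
Qed.

Lemma tens3E u v w :
  tens3 u v w = lext (fun i => lext (fun j => lext (fun l => << (i, j, l) >>) w) v) u.
Proof.
rewrite /tens3 /lext; apply: eq_bigr => i _; rewrite scaler_sumr.
apply: eq_bigr => j _; rewrite !scaler_sumr.
by apply: eq_bigr => l _; rewrite malgUZ !scalerA.
Qed.

Lemma tens2_0l v : tens2 (0 : {malg S[I]}) v = 0.
Proof. by rewrite tens2E linear0. Qed.

Lemma tens2_0r u : tens2 u (0 : {malg S[J]}) = 0.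
Proof. by rewrite tens2E lext_eq0 // => i; apply: linear0. Qed.

Lemma tens3N1 u v w : tens3 (- u) v w = - tens3 u v w.
Proof. by rewrite !tens3E linearN. Qed.

Lemma tens3N2 u v w : tens3 u (- v) w = - tens3 u v w.
Proof. by rewrite !tens3E -lextNf; apply: eq_lext => i; rewrite linearN. Qed.

Lemma tens3N3 u v w : tens3 u v (- w) = - tens3 u v w.
Proof.
rewrite !tens3E -lextNf; apply: eq_lext => i.
by rewrite -lextNf; apply: eq_lext => j; rewrite linearN.
Qed.

Lemma tens3_0l v w : tens3 (0 : {malg S[I]}) v w = 0.
Proof. by rewrite tens3E linear0. Qed.

Lemma tens3_0m u w : tens3 u (0 : {malg S[J]}) w = 0.
Proof. by rewrite tens3E lext_eq0 // => i; apply: linear0. Qed.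

Lemma tens3_0r u v : tens3 u v (0 : {malg S[L]}) = 0.
Proof. by rewrite tens3E lext_eq0 // => i; rewrite lext_eq0 // => j; apply: linear0. Qed.

End Tensors.

Section TensorMaps.
Variables (S : comNzRingType) (I I' J J' L L' : choiceType).

Lemma mtens2_0l (g : J -> {malg S[J']}) : mtens2 (fun _ : I => 0 : {malg S[I']}) g = fun=> 0.
Proof. by apply: funext => x; apply: tens2_0l. Qed.

Lemma mtens2_0r (f : I -> {malg S[I']}) : mtens2 f (fun _ : J => 0 : {malg S[J']}) = fun=> 0.
Proof. by apply: funext => x; apply: tens2_0r. Qed.

Lemma mtens3_0l (g : J -> {malg S[J']}) (h : L -> {malg S[L']}) :
  mtens3 (fun _ : I => 0 : {malg S[I']}) g h = fun=> 0.
Proof. by apply: funext => x; apply: tens3_0l. Qed.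

Lemma mtens3_0m (f : I -> {malg S[I']}) (h : L -> {malg S[L']}) :
  mtens3 f (fun _ : J => 0 : {malg S[J']}) h = fun=> 0.
Proof. by apply: funext => x; apply: tens3_0m. Qed.

Lemma mtens3_0r (f : I -> {malg S[I']}) (g : J -> {malg S[J']}) :
  mtens3 f g (fun _ : L => 0 : {malg S[L']}) = fun=> 0.
Proof. by apply: funext => x; apply: tens3_0r. Qed.

Lemma mtens3_idm : mtens3 (@idm S I) (@idm S J) (@idm S L) = @idm S _.
Proof. by apply: funext => -[[x y] z]; rewrite /mtens3 /= tens3E !lext1. Qed.

End TensorMaps.

Section Coderivations.
Variables (S : comNzRingType) (I : choiceType).
Implicit Types (f : I -> {malg S[I]}) (T : I * I * I -> {malg S[I]}).

Definition der3 f : I * I * I -> {malg S[(I * I * I)%type]} :=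
  addm (addm (mtens3 f (@idm S I) (@idm S I)) (mtens3 (@idm S I) f (@idm S I)))
       (mtens3 (@idm S I) (@idm S I) f).

Lemma der3N f : der3 (fun j => - f j) =1 (fun p => - der3 f p).
Proof.
by move=> -[[x y] z]; rewrite /der3 /addm /mtens3 /= tens3N1 tens3N2 tens3N3 !opprD.
Qed.

Lemma coderivationE D f :
  coderivation D f <-> Defs.comp (Delta3 D) f =1 Defs.comp (der3 f) (Delta3 D).
Proof. by []. Qed.

Lemma coderivationN D f : coderivation D f -> coderivation D (fun j => - f j).
Proof.
move=> /coderivationE der; apply/coderivationE => j.
rewrite /Defs.comp /= linearN /= -/(Defs.comp (Delta3 D) f j) der /Defs.comp -lextNf.
by apply: eq_lext => p; rewrite der3N.
Qed.

Lemma delta1E T f : delta1 T f =1 subm (Defs.comp f T) (Defs.comp T (der3 f)).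
Proof.
move=> -[[x y] z]; rewrite /delta1 /subm /Defs.comp /der3 /addm /mtens3 /=.
by rewrite !linearD /= !addrA.
Qed.

Lemma delta1N T f : delta1 T (fun j => - f j) =1 (fun p => - delta1 T f p).
Proof. by move=> p; rewrite !delta1E /subm /Defs.comp lextNf der3N linearN /= opprD. Qed.

End Coderivations.

Lemma mcoeff_cmap (S S' : comNzRingType) (J : choiceType) (phi : S -> S')
    (v : {malg S[J]}) k :
  phi 0 = 0 -> (cmap phi v)@_k = phi v@_k.
Proof.
move=> phi0; rewrite /cmap raddf_sum /=.
under eq_bigr do rewrite mcoeffU.
have [kv|kNv] := boolP (k \in msupp v).
  rewrite (big_fsetD1 k kv) /= eqxx mulr1n big1_fset ?addr0 // => j.
  by rewrite in_fsetD1 => /andP[/negbTE -> _]; rewrite mulr0n.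
rewrite mcoeff_outdom // phi0 big1_fset // => j jv _.
by case: eqP => [jk|]; [move: kNv; rewrite -jk jv | rewrite mulr0n].
Qed.

(* [dualv a b] is a + h b.  It is locked: when unfolded, matching its coefficients
   against those of k-modules makes unification diverge. *)
HB.lock Definition dualv (K : fieldType) (J : choiceType) (a b : {malg K[J]})
  : {malg (dual K)[J]} := cmap (@dembed K) a + hbar K *: cmap (@dembed K) b.

Section DualVectors.
Variables (K : fieldType) (J : choiceType).
Local Notation R := (dual K).
Implicit Types (a b c d : {malg K[J]}) (v : {malg R[J]}).

Lemma dual_eq (x y : R) : dfst x = dfst y -> dsnd x = dsnd y -> x = y.
Proof. by case: x => a b; case: y => c d /= -> ->. Qed.

Lemma mcoeff_dualv a b j : (dualv a b)@_j = Dual a@_j b@_j.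
Proof.
rewrite unlock mcoeffD mcoeffZ !mcoeff_cmap //.
by apply: dual_eq; rewrite /= ?(mul0r, mul1r, mulr0, add0r, addr0).
Qed.

Lemma dualv_inj a b c d : dualv a b = dualv c d -> a = c /\ b = d.
Proof.
move/malgP=> e; split; apply/malgP => j; have := e j;
  by rewrite !mcoeff_dualv => -[].
Qed.

Lemma dualvD a b c d : dualv a b + dualv c d = dualv (a + c) (b + d).
Proof. by apply/malgP => j; rewrite mcoeffD !mcoeff_dualv !mcoeffD. Qed.

Lemma dualv0 : dualv (0 : {malg K[J]}) 0 = 0.
Proof. by apply/malgP => j; rewrite mcoeff_dualv !mcoeff0. Qed.

Lemma dualv_sum (A : Type) (r : seq A) (F G : A -> {malg K[J]}) :
  \sum_(t <- r) dualv (F t) (G t) = dualv (\sum_(t <- r) F t) (\sum_(t <- r) G t).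
Proof.
elim: r => [|t r IH]; first by rewrite !big_nil dualv0.
by rewrite !big_cons IH dualvD.
Qed.

Lemma dualvZ (c : K) a b : dembed c *: dualv a b = dualv (c *: a) (c *: b).
Proof.
apply/malgP => j; rewrite mcoeffZ !mcoeff_dualv !mcoeffZ.
by apply: dual_eq; rewrite /= ?(mul0r, addr0).
Qed.

Lemma hbar_dualv a b : hbar K *: dualv a b = dualv 0 a.
Proof.
apply/malgP => j; rewrite mcoeffZ !mcoeff_dualv mcoeff0.
by apply: dual_eq; rewrite /= ?(mul0r, mul1r, add0r).
Qed.

Lemma dualvU (j : J) : << j >> = dualv (<< j >> : {malg K[J]}) 0.
Proof.
apply/malgP => k; rewrite mcoeff_dualv mcoeff0 !mcoeffU.
by case: (j == k).
Qed.

Lemma dualv_a0 a : dualv a 0 = cmap (@dembed K) a.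
Proof. by apply/malgP => j; rewrite mcoeff_dualv mcoeff_cmap // mcoeff0. Qed.

Lemma dualv_split v : v = dualv (cmap (@dfst K) v) (cmap (@dsnd K) v).
Proof. by apply/malgP => k; rewrite mcoeff_dualv !mcoeff_cmap //; case: (v@_k). Qed.

Lemma cmap_fst_dualv a b : cmap (@dfst K) (dualv a b) = a.
Proof. by apply/malgP => k; rewrite mcoeff_cmap // mcoeff_dualv. Qed.
End DualVectors.

Section DualMaps.
Variable K : fieldType.
Local Notation R := (dual K).

Definition dualm (I J : choiceType) (f0 f1 : J -> {malg K[I]}) : J -> {malg R[I]} :=
  fun x => dualv (f0 x) (f1 x).

Lemma lext_dualv0 (I J : choiceType) (f0 f1 : J -> {malg K[I]}) (v : {malg K[J]}) :
  lext (dualm f0 f1) (dualv v 0) = dualv (lext f0 v) (lext f1 v).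
Proof.
rewrite dualv_a0 /cmap linear_sum /= [lext f0 v]/lext [lext f1 v]/lext -dualv_sum.
by apply: eq_bigr => j _; rewrite lextU dualvZ.
Qed.

Lemma lext_dualv (I J : choiceType) (f0 f1 : J -> {malg K[I]}) (v0 v1 : {malg K[J]}) :
  lext (dualm f0 f1) (dualv v0 v1) = dualv (lext f0 v0) (lext f0 v1 + lext f1 v0).
Proof.
have -> : dualv v0 v1 = dualv v0 0 + hbar K *: dualv v1 0.
  by rewrite hbar_dualv dualvD addr0 add0r.
by rewrite linearD linearZ /= !lext_dualv0 hbar_dualv dualvD addr0 addrC.
Qed.

Section DualTensors.
Variables I J L : choiceType.
Implicit Types (u : {malg K[I]}) (v : {malg K[J]}) (w : {malg K[L]}).

Lemma tens2_dualv u0 u1 v0 v1 :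
  tens2 (dualv u0 u1) (dualv v0 v1) = dualv (tens2 u0 v0) (tens2 u1 v0 + tens2 u0 v1).
Proof.
pose g i j : {malg K[(I * J)%type]} := << (i, j) >>.
rewrite [LHS]tens2E (eq_lext (g := dualm (fun i => lext (g i) v0) (fun i => lext (g i) v1))).
  by rewrite lext_dualv !tens2E.
move=> i; rewrite (eq_lext (g := dualm (g i) (fun=> 0))) => [|j]; last exact: dualvU.
by rewrite lext_dualv (lext_eq0 (f := fun=> 0)) ?addr0.
Qed.

Lemma tens3_dualv u0 u1 v0 v1 w0 w1 :
  tens3 (dualv u0 u1) (dualv v0 v1) (dualv w0 w1) =
  dualv (tens3 u0 v0 w0) (tens3 u1 v0 w0 + tens3 u0 v1 w0 + tens3 u0 v0 w1).
Proof.
pose h i j l : {malg K[(I * J * L)%type]} := << (i, j, l) >>.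
pose B0 i j := lext (h i j) w0; pose B1 i j := lext (h i j) w1.
rewrite [LHS]tens3E (eq_lext (g := dualm (fun i => lext (B0 i) v0)
                                 (fun i => lext (B0 i) v1 + lext (B1 i) v0))).
  by rewrite lext_dualv lextDf !tens3E addrA.
move=> i; rewrite (eq_lext (g := dualm (B0 i) (B1 i))); first exact: lext_dualv.
move=> j; rewrite (eq_lext (g := dualm (h i j) (fun=> 0))) => [|l]; last exact: dualvU.
by rewrite lext_dualv (lext_eq0 (f := fun=> 0)) ?addr0.
Qed.

End DualTensors.

Lemma eq_dualm (I J : choiceType) (f0 f1 g0 g1 : J -> {malg K[I]}) :
  f0 =1 g0 -> (dualm f0 f1 =1 dualm g0 g1 <-> f1 =1 g1).
Proof.
move=> e0; split=> [e1 x|e1 x]; last by rewrite /dualm e0 e1.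
by have /dualv_inj[] := e1 x.
Qed.

Lemma dualm_split (I J : choiceType) (g : J -> {malg R[I]}) :
  g = dualm (modh g) (fun j => cmap (@dsnd K) (g j)).
Proof. by apply: funext => j; apply: dualv_split. Qed.

Lemma modh_dualm (I J : choiceType) (f0 f1 : J -> {malg K[I]}) : modh (dualm f0 f1) =1 f0.
Proof. by move=> j; apply: cmap_fst_dualv. Qed.

Lemma comp_dualm (I J L : choiceType) (f0 f1 : J -> {malg K[I]})
    (g0 g1 : L -> {malg K[J]}) :
  Defs.comp (dualm f0 f1) (dualm g0 g1) =
  dualm (Defs.comp f0 g0) (addm (Defs.comp f0 g1) (Defs.comp f1 g0)).
Proof. by apply: funext => l; apply: lext_dualv. Qed.

Lemma mtens2_dualm (I I' J J' : choiceType) (a0 a1 : I -> {malg K[I']})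
    (b0 b1 : J -> {malg K[J']}) :
  mtens2 (dualm a0 a1) (dualm b0 b1) =
  dualm (mtens2 a0 b0) (addm (mtens2 a1 b0) (mtens2 a0 b1)).
Proof. by apply: funext => x; apply: tens2_dualv. Qed.

Lemma mtens3_dualm (I I' J J' L L' : choiceType) (a0 a1 : I -> {malg K[I']})
    (b0 b1 : J -> {malg K[J']}) (c0 c1 : L -> {malg K[L']}) :
  mtens3 (dualm a0 a1) (dualm b0 b1) (dualm c0 c1) =
  dualm (mtens3 a0 b0 c0)
        (addm (addm (mtens3 a1 b0 c0) (mtens3 a0 b1 c0)) (mtens3 a0 b0 c1)).
Proof. by apply: funext => x; apply: tens3_dualv. Qed.

Lemma idm_dualm (J : choiceType) : @idm R J = dualm (@idm K J) (fun=> 0).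
Proof. by apply: funext => j; apply: dualvU. Qed.

Lemma sigma_dualm (I : choiceType) : @sigma R I = dualm (@sigma K I) (fun=> 0).
Proof. by apply: funext => -[[x y] z]; apply: dualvU. Qed.

Lemma liftm2_dualm (I : choiceType) (D : I -> {malg K[(I * I)%type]}) :
  liftm2 D = dualm D (fun=> 0).
Proof. by apply: funext => j; rewrite /dualm dualv_a0. Qed.

Lemma Tpsi_dualm (I : choiceType) (T psi : I * I * I -> {malg K[I]}) :
  Tpsi T psi = dualm T psi.
Proof. by apply: funext => x; rewrite /dualm unlock. Qed.

Lemma Delta3_dualm (I : choiceType) (D : I -> {malg K[(I * I)%type]}) :
  Delta3 (dualm D (fun=> 0)) = dualm (Delta3 D) (fun=> 0).
Proof.
rewrite /Delta3 idm_dualm mtens2_dualm mtens2_0l mtens2_0r add0m comp_dualm.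
by rewrite comp0m compm0 add0m.
Qed.

Section TSDTerms.
Variable I : choiceType.

Lemma first_slot_dualm (G0 G1 F0 F1 : I * I * I -> {malg K[I]}) :
  first_slot (dualm G0 G1) (dualm F0 F1) =
  dualm (first_slot G0 F0) (addm (first_slot G0 F1) (first_slot G1 F0)).
Proof.
apply: funext => -[[[[x y] z] w] u] /=.
by rewrite [<< w >>]dualvU [<< u >>]dualvU tens3_dualv tens3_0m tens3_0r !addr0 lext_dualv.
Qed.

Lemma sweedler_dualm (D : I -> {malg K[(I * I)%type]})
    (G0 G1 A0 A1 B0 B1 C0 C1 : I * I * I -> {malg K[I]}) :
  sweedler (dualm D (fun=> 0)) (dualm G0 G1)
           (dualm A0 A1) (dualm B0 B1) (dualm C0 C1) =
  dualm (sweedler D G0 A0 B0 C0)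
     (addm (addm (addm (sweedler D G1 A0 B0 C0) (sweedler D G0 A1 B0 C0))
                 (sweedler D G0 A0 B1 C0)) (sweedler D G0 A0 B0 C1)).
Proof.
apply: funext => -[[[[x y] z] w] u] /=.
rewrite Delta3_dualm /dualm tens2_dualv tens2_0l tens2_0r addr0.
pose a (F : I * I * I -> {malg K[I]}) (q : I * I * I * (I * I * I)) := F (x, q.1.1.1, q.2.1.1).
pose b (F : I * I * I -> {malg K[I]}) (q : I * I * I * (I * I * I)) := F (y, q.1.1.2, q.2.1.2).
pose c (F : I * I * I -> {malg K[I]}) (q : I * I * I * (I * I * I)) := F (z, q.1.2, q.2.2).
rewrite (eq_lext (g := dualm (fun q => tens3 (a A0 q) (b B0 q) (c C0 q))
  (fun q => tens3 (a A1 q) (b B0 q) (c C0 q) + tens3 (a A0 q) (b B1 q) (c C0 q)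
            + tens3 (a A0 q) (b B0 q) (c C1 q)))).
  by rewrite lext_dualv0 lext_dualv !lextDf !linearD /= addrC !addrA.
by move=> q; apply: tens3_dualv.
Qed.

End TSDTerms.

End DualMaps.

Lemma subr4_eq0 (V : zmodType) (x a b c d : V) :
  (x - a - b - c - d == 0) = (x == a + b + c + d).
Proof. by rewrite -!addrA -!opprD !addrA subr_eq0. Qed.

Lemma addr_eq_subr (V : zmodType) (a b c d : V) : (a + b == c + d) = (b - c == d - a).
Proof. by rewrite subr_eq addrAC [b == _]eq_sym subr_eq [c + d]addrC [b + a]addrC. Qed.

Section Deformations.
Variables (K : fieldType) (I : choiceType).
Variables (D : I -> {malg K[(I * I)%type]}) (T : I * I * I -> {malg K[I]}).

Lemma TSD_cond_i_Tpsi :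
  TSD_cond_i D T -> forall psi, TSD_cond_i (liftm2 D) (Tpsi T psi) <-> C2 D T psi.
Proof.
move=> HT psi; rewrite /TSD_cond_i /C2 liftm2_dualm Tpsi_dualm Delta3_dualm sigma_dualm.
rewrite !mtens3_dualm mtens3_0l mtens3_0m mtens3_0r !comp_dualm.
rewrite !(comp0m, compm0, add0m, addm0).
exact: eq_dualm HT.
Qed.

Lemma TSD_cond_ii_Tpsi :
  TSD_cond_ii D T ->
  forall psi, TSD_cond_ii (liftm2 D) (Tpsi T psi) <-> delta2 D T psi =1 (fun=> 0).
Proof.
move=> HT psi; rewrite /TSD_cond_ii liftm2_dualm Tpsi_dualm first_slot_dualm sweedler_dualm.
apply: (iff_trans (eq_dualm _ _ HT)); rewrite /delta2 /addm.
by split=> e p; apply/eqP; [rewrite subr4_eq0 e | rewrite -subr4_eq0 e].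
Qed.

Lemma coderivation_dualm f :
  Defs.comp (Delta3 (liftm2 D)) (dualm (@idm K I) f) =1
    Defs.comp (mtens3 (dualm (@idm K I) f) (dualm (@idm K I) f) (dualm (@idm K I) f))
              (Delta3 (liftm2 D))
  <-> coderivation D f.
Proof.
rewrite liftm2_dualm Delta3_dualm mtens3_dualm mtens3_idm !comp_dualm.
rewrite comp_idml comp_idmr !(comp0m, compm0, add0m, addm0).
exact: eq_dualm.
Qed.

Lemma delta1_dualm f psi psi' :
  Defs.comp (dualm (@idm K I) f) (dualm T psi) =1
    Defs.comp (dualm T psi')
              (mtens3 (dualm (@idm K I) f) (dualm (@idm K I) f) (dualm (@idm K I) f))
  <-> delta1 T f =1 subm psi' psi.
Proof.
rewrite mtens3_dualm mtens3_idm !comp_dualm !comp_idml !comp_idmr.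
apply: (iff_trans (eq_dualm _ _ (frefl _))); rewrite /addm /subm.
split=> e p; apply/eqP; first by rewrite delta1E /subm /= -addr_eq_subr e.
by move: (e p); rewrite delta1E /subm /= addr_eq_subr => ->.
Qed.
End Deformations.

Theorem mainTheorem3 (k : fieldType) (I : choiceType)
  (D : I -> {malg k[(I * I)%type]}) (eps : I -> k) (T : I * I * I -> {malg k[I]}) :
  is_TSD D eps T ->
  [/\ (forall psi : I * I * I -> {malg k[I]},
         inf_deformation D T (Tpsi T psi) <-> Z2 D T psi),
      (forall psi psi' : I * I * I -> {malg k[I]},
         Z2 D T psi -> Z2 D T psi' ->
         (equiv_deformations D (Tpsi T psi) (Tpsi T psi')
            <-> B2 D T (subm psi psi')))
    & (forall T' : I * I * I -> {malg (dual k)[I]},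
         inf_deformation D T T' -> exists psi, T' =1 Tpsi T psi)].
Proof.
case=> _ _ HTi HTii; split.
- move=> psi; have Ei := TSD_cond_i_Tpsi HTi psi; have Eii := TSD_cond_ii_Tpsi HTii psi.
  split=> [[_ c2 d2] | [c2 d2]]; first exact: conj (Ei.1 c2) (Eii.1 d2).
  by split; [rewrite Tpsi_dualm; apply: modh_dualm | exact: Ei.2 | exact: Eii.2].
- move=> psi psi' _ _; rewrite !Tpsi_dualm; split.
  + case=> g [g1 coalg hom]; pose f j := cmap (@dsnd k) (g j).
    have eg : g = dualm (@idm k I) f by rewrite {1}(dualm_split g) (funext g1).
    rewrite eg in coalg hom; exists (fun j => - f j).
      exact: coderivationN ((coderivation_dualm _ _).1 coalg).
    by move=> p; rewrite delta1N ((delta1_dualm _ _ _ _).1 hom) /subm opprB.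
  + case=> f der d1; exists (dualm (@idm k I) (fun j => - f j)); split.
    * exact: modh_dualm.
    * exact: (coderivation_dualm _ _).2 (coderivationN der).
    * by apply: (delta1_dualm _ _ _ _).2 => p; rewrite delta1N d1 /subm opprB.
- move=> T' [T0 _ _]; exists (fun x => cmap (@dsnd k) (T' x)) => x.
  by rewrite Tpsi_dualm {1}(dualm_split T') /dualm T0.
Qed.
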